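(* Let $T$ be a compact metric space, let $\eta$ be a sample-continuous max-infinitely divisible process on $T$ with vertex function identically $0$ and exponent measure $\mu$, and let $\Phi=\sum_{i=1}^N\delta_{\phi_i}$ be a Poisson random measure on $\mathbb{C}_0$ with intensity $\mu$ with $\eta=\max(\Phi)$. Let $K\subset T$ be closed and $\Phi_K^+=\sum_{i=1}^N1_{\{\exists t\in K:\ \phi_i(t)\ge\eta(t)\}}\delta_{\phi_i}$ the $K$-extremal point measure. Then $\Phi_K^+$ is almost surely finite if and only if one of the following holds: (i) $\mu(\mathbb{C}_0)<+\infty$; (ii) $\mu(\mathbb{C}_0)=+\infty$ and $\inf_{t\in K}\eta(t)>0$ almost surely.
   Context: $\mathbb{C}_0$ is the set of continuous $f:T\to[0,\infty)$ not identically zero with the sup norm. The vertex function is $h(t)=\sup\{x:\mathbb P(\eta(t)\ge x)=1\}$; the exponent measure $\mu$ is a Borel measure on $\mathbb{C}_0$ with $\mu(\{f:\|f\|>\varepsilon\})<\infty$ for all $\varepsilon>0$, such that $\mathbb P[\eta(K_i)<x_i,1\le i\le n]=\exp[-\mu(\cup_i\{f: f(K_i)\ge x_i\})]$ ($f(A)=\sup_Af$). $\max(\Phi)(t)=\max\{\phi(t):\phi\text{ atom of }\Phi\}$, and $0$ if $\Phi=0$. *)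

From HB Require Import structures.
From mathcomp Require Import all_boot all_order all_algebra.
From mathcomp Require Import all_classical all_reals all_analysis.
Set Implicit Arguments.
Unset Strict Implicit.
Unset Printing Implicit Defensive.
Import Order.TTheory GRing.Theory Num.Theory.
Import numFieldNormedType.Exports.
Local Open Scope classical_set_scope.
Local Open Scope ring_scope.

Section MaxIdDefs.
Context {R : realType} (T : metricType R).

Definition C0 : set (T -> R) :=
  [set f : T -> R | continuous f /\ (forall t, 0 <= f t) /\ exists t, f t != 0].

Definition supdist (f g : T -> R) : \bar R :=
  ereal_sup [set (`|f t - g t|)%:E | t in [set: T]].
Definition supnorm (f : T -> R) : \bar R := supdist f (fun=> 0).

Definition C0_open (U : set (T -> R)) : Prop :=
  U `<=` C0 /\
  forall f, U f -> exists2 e : R, 0 < e &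
    forall g, C0 g -> (supdist f g < e%:E)%E -> U g.

(** measurable space whose measurable sets are generated by the open sets of
    C_0; its trace on C_0 is the Borel sigma-algebra of C_0. *)
Definition C0_borel := g_sigma_algebraType C0_open.

Definition supOn (f : T -> R) (A : set T) : \bar R :=
  ereal_sup [set (f t)%:E | t in A].

(** index set {i | i < N} (N = None means N = +infinity) *)
Definition idx (N : option nat) : set nat :=
  if N is Some k then [set i | (i < k)%N] else [set: nat].

Definition point_measure (N : option nat) (phi : nat -> T -> R)
    (A : set (T -> R)) : \bar R :=
  (\esum_(i in idx N) (\1_A (phi i))%:E)%E.

Definition maxPhi (N : option nat) (phi : nat -> T -> R) (t : T) : \bar R :=
  ereal_sup ([set (phi i t)%:E | i in idx N] `|` [set 0%E]).

Definition pois_pmf (m : R) (k : nat) : R :=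
  expR (- m) * m ^+ k / (k`!)%:R.

Definition expNe (a : \bar R) : \bar R :=
  if a is +oo%E then 0%E else (expR (- fine a))%:E.

Section Prob.
Context {d : measure_display} {Omega : measurableType d}
  (P : probability Omega R).

(** Phi(omega) = sum_{i in idx (N omega)} delta_{phi omega i} is a Poisson
    random measure on C_0 with intensity mu *)
Definition poisson_random_measure (N : Omega -> option nat)
    (phi : Omega -> nat -> T -> R)
    (mu : {measure set C0_borel -> \bar R}) : Prop :=
  [/\ (forall w i, idx (N w) i -> C0 (phi w i)),
      (forall (A : set C0_borel) (k : \bar R), measurable A ->
         measurable [set w | point_measure (N w) (phi w) A = k]),
      (forall A : set C0_borel, measurable A -> (mu A < +oo)%E ->
         forall k : nat,
           P [set w | point_measure (N w) (phi w) A = (k%:R)%:E] =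
           (pois_pmf (fine (mu A)) k)%:E),
      (forall A : set C0_borel, measurable A -> mu A = +oo%E ->
           P [set w | point_measure (N w) (phi w) A = +oo%E] = 1%E) &
      (forall (n : nat) (A : nat -> set C0_borel) (k : nat -> \bar R),
         (forall i, (i < n)%N -> measurable (A i)) ->
         (forall i j, (i < n)%N -> (j < n)%N -> i != j -> A i `&` A j = set0) ->
         P (\bigcap_(i in [set i | (i < n)%N])
              [set w | point_measure (N w) (phi w) (A i) = k i]) =
         (\prod_(i < n) P [set w | point_measure (N w) (phi w) (A i) = k i])%E)].

Definition vertex (eta : Omega -> T -> R) (t : T) : \bar R :=
  ereal_sup [set x%:E | x in [set x : R | P [set w | x <= eta w t] = 1%E]].

Definition exponent_measure (eta : Omega -> T -> R)
    (mu : {measure set C0_borel -> \bar R}) : Prop :=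
  mu (~` C0) = 0%E /\
  (forall e : R, 0 < e -> (mu [set f | C0 f /\ (e%:E < supnorm f)%E] < +oo)%E) /\
  (forall (n : nat) (K : nat -> set T) (x : nat -> R),
     (forall i, (i < n)%N -> closed (K i) /\ 0 < x i) ->
     P [set w | forall i, (i < n)%N -> (supOn (eta w) (K i) < (x i)%:E)%E] =
     expNe (mu [set f | C0 f /\ exists2 i, (i < n)%N &
                                  ((x i)%:E <= supOn f (K i))%E])).

End Prob.
End MaxIdDefs.
Arguments C0 {R} T.
Arguments C0_borel {R} T.

From HB Require Import structures.
From mathcomp Require Import all_boot all_order all_algebra.
From mathcomp Require Import all_classical all_reals all_analysis.
From mathcomp Require Import finmap lra.
Import Order.TTheory GRing.Theory Num.Theory.
Import numFieldNormedType.Exports.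
Local Open Scope classical_set_scope.
Local Open Scope ring_scope.

(* If Phi has finitely many atoms there is nothing to prove. Under (i) the
   total mass Phi(C_0) is Poisson with finite mean, hence a.s. finite. Under
   (ii), once inf_K eta > 1/(n+1) every K-extremal atom has sup norm
   > 1/(n+1), and mu gives finite mass to that set of functions. Conversely,
   if mu(C_0) = +oo then Phi a.s. has infinitely many atoms; if eta took a
   value <= 0 at some t0 in K (the infimum is attained on the compact K),
   then every atom, being nonnegative, would be K-extremal. *)

Lemma series_pois_pmf (R : realType) (m : R) :
  (\sum_(k <oo) (pois_pmf m k)%:E = 1)%E.
Proof.
have cvg_series : series (pois_pmf m) @ \oo --> (1 : R).
  have -> : series (pois_pmf m) = (fun n => expR (- m) * series (exp_coeff m) n).
    apply/funext => n; rewrite /series/= mulr_sumr; apply: eq_bigr => k _.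
    by rewrite /pois_pmf /exp_coeff/= mulrA.
  rewrite -(expRxMexpNx_1 m) mulrC.
  exact: cvgM (cvg_cst _) (is_cvg_series_exp_coeff m).
rewrite (_ : (fun n => _) = EFin \o series (pois_pmf m)); last first.
  by apply/funext => n; rewrite /series /= sumEFin.
rewrite EFin_lim; last by apply/cvg_ex; exists 1.
by rewrite (cvg_lim _ cvg_series).
Qed.

Section PointMeasure.
Context {R : realType} {T : metricType R}.
Implicit Types (N : option nat) (f : nat -> T -> R) (A : set (T -> R)).

Lemma point_measure_finite_support N f A :
  point_measure N f A != +oo%E -> finite_set [set i | idx N i /\ A (f i)].
Proof.
apply: contraNP => infS; apply/eqP/eq_infty => r.
have [B BS Bn] := infinite_set_fset (Num.truncn r).+1 infS.
apply: esum_ge; exists [set` B]; first by split=> // i /BS[].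
rewrite fsbig_finite//= set_fsetK (eq_big_seq (fun=> 1%:E)); last first.
  by move=> i /BS[_ Ai]; rewrite indicE mem_set.
rewrite sumEFin lee_fin big_const_seq count_predT iter_addr addr0.
by rewrite (le_trans (ltW (truncnS_gt r)))// ler_nat.
Qed.

Lemma point_measure_Some_neq_infty k f A : point_measure (Some k) f A != +oo%E.
Proof.
have fin_idx : finite_set (idx (Some k)) := finite_II k.
rewrite /point_measure esum_fset//; first by rewrite fsbig_finite// sumEFin.
Qed.

Lemma point_measure_infty_None N f A :
  point_measure N f A = +oo%E -> N = None.
Proof.
by case: N => // k /eqP; rewrite (negbTE (point_measure_Some_neq_infty _ _ _)).
Qed.

End PointMeasure.

Section PoissonRandomMeasure.
Context {R : realType} {T : metricType R} {d : measure_display}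
  {Omega : measurableType d} {P : probability Omega R}
  {mu : {measure set (C0_borel T) -> \bar R}}
  {N : Omega -> option nat} {phi : Omega -> nat -> T -> R}.
Hypothesis prm : poisson_random_measure P N phi mu.
Local Notation Phi w := (point_measure (N w) (phi w)).

Lemma poisson_random_measure_infty0 (A : set (C0_borel T)) :
  measurable A -> (mu A < +oo)%E -> P [set w | Phi w A = +oo%E] = 0%E.
Proof.
case: prm => _ mPhi Ppois _ _ mA muA.
pose E k := [set w | Phi w A = (k%:R)%:E].
have mE k : measurable (E k) := mPhi A _ mA.
have tE : trivIset setT E.
  move=> i j _ _ [w [Ei Ej]]; move: Ej; rewrite /E/= Ei.
  by move=> -[/eqP]; rewrite eqr_nat => /eqP.
(* The Poisson weights of the finite values of [Phi w A] already sum to 1. *)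
have PE : P (\bigcup_k E k) = 1%E.
  rewrite measure_bigcup// -(@series_pois_pmf _ (fine (mu A))).
  congr (lim (_ @ \oo)); apply/funext => n; rewrite big_mkcond/=.
  by apply: eq_bigr => k _; rewrite in_setT Ppois.
have mU : measurable (\bigcup_k E k) by exact: bigcup_measurable.
apply/eqP; rewrite -measure_le0 -(@subee _ 1%E)// -{2}PE -probability_setC//.
apply: le_measure; [exact/mem_set/mPhi|exact/mem_set/measurableC|].
by move=> w /= Phi_oo [k _]; rewrite /E/= Phi_oo.
Qed.

Lemma ae_point_measure_neq_infty (A : set (C0_borel T)) :
  measurable A -> (mu A < +oo)%E -> {ae P, forall w, Phi w A != +oo%E}.
Proof.
move=> mA muA; exists [set w | Phi w A = +oo%E]; split.
- by case: prm => _ mPhi _ _ _; exact: mPhi.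
- exact: poisson_random_measure_infty0.
- by move=> w /negP; rewrite negbK => /eqP.
Qed.

Lemma ae_point_measure_infty (A : set (C0_borel T)) :
  measurable A -> mu A = +oo%E -> {ae P, forall w, Phi w A = +oo%E}.
Proof.
case: prm => _ mPhi _ Pinf _ mA muA.
exists (~` [set w | Phi w A = +oo%E]); split => //.
- exact/measurableC/mPhi.
- by rewrite probability_setC ?Pinf ?subee//; exact: mPhi.
Qed.

End PoissonRandomMeasure.

Lemma exists_invSn_lte (R : realType) (x : \bar R) :
  (0 < x)%E -> exists n : nat, ((n.+1%:R)^-1%:E < x)%E.
Proof.
case: x => [r| |]// r0; last by exists 0%N; rewrite ltry.
exists (Num.truncn r^-1); rewrite lte_fin -[X in _ < X]invrK.
by rewrite ltf_pV2 ?posrE ?invr_gt0// truncnS_gt.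
Qed.

Section ExtremalAtoms.
Context {R : realType} {T : metricType R}.

Definition extremal_atoms (K : set T) (eta : T -> R) (N : option nat)
    (phi : nat -> T -> R) : set nat :=
  [set i | idx N i /\ exists2 t, K t & eta t <= phi i t].

Lemma le_supnorm (f : T -> R) t : (`|f t|%:E <= supnorm f)%E.
Proof. by apply: ereal_sup_ubound; exists t; rewrite ?subr0. Qed.

Lemma C0_open_supnorm_gt (e : R) :
  C0_open [set f : T -> R | C0 T f /\ (e%:E < supnorm f)%E].
Proof.
split=> [f []//|f [_ /ereal_sup_gt [_ [t _ <-]]]].
rewrite lte_fin subr0 => e_lt_ft.
exists (`|f t| - e) => [|g C0g fg_close]; first by rewrite subr_gt0.
split=> //; apply: lt_le_trans (le_supnorm _ t).
have : (`|f t - g t|%:E <= supdist f g)%E by apply: ereal_sup_ubound; exists t.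
move=> /le_lt_trans /(_ fg_close); rewrite !lte_fin.
have := ler_distD (g t) (f t) 0; rewrite !subr0; lra.
Qed.

Context {K : set T} {eta : T -> R} {N : option nat} {phi : nat -> T -> R}.
Hypothesis C0phi : forall i, idx N i -> C0 T (phi i).
Local Notation extremal := (extremal_atoms K eta N phi).

Lemma extremal_atoms_finite (A : set (T -> R)) :
  phi @` extremal `<=` A -> point_measure N phi A != +oo%E ->
  finite_set extremal.
Proof.
move=> extA /point_measure_finite_support; apply: sub_finite_set => i [Ni exi].
by split=> //; apply: extA; exists i.
Qed.

Lemma extremal_atoms_supnorm_gt (e : R) :
  (e%:E < ereal_inf [set (eta t)%:E | t in K])%E ->
  phi @` extremal `<=` [set f | C0 T f /\ (e%:E < supnorm f)%E].
Proof.
move=> e_lt_inf _ [i [Ni [t Kt eta_le]] <-]; split; first exact: C0phi.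
apply: lt_le_trans e_lt_inf _; apply: le_trans (le_supnorm _ t).
apply: le_trans (ereal_inf_lbound _) _; first by exists t.
by rewrite lee_fin (le_trans eta_le) ?ler_norm.
Qed.

Lemma extremal_atoms_idx t0 : K t0 -> eta t0 <= 0 -> extremal = idx N.
Proof.
move=> Kt0 eta_le0; apply/seteqP; split=> [i []//|i Ni].
split=> //; exists t0 => //; apply: le_trans eta_le0 _.
by have [_ [+ _]] := C0phi i Ni.
Qed.

Lemma extremal_atoms_finite_inf_gt0 :
  compact K -> continuous eta -> infinite_set (idx N) -> finite_set extremal ->
  (0 < ereal_inf [set (eta t)%:E | t in K])%E.
Proof.
move=> cK ceta infN fin_ext.
have [->|/set0P K0] := eqVneq K set0; first by rewrite image_set0 ereal_inf0.
have [t0 /set_mem Kt0 eta_min] := compact_EVT_min K0 cK (continuous_subspaceT ceta).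
have [eta_gt0|eta_le0] := ltP 0 (eta t0).
  rewrite (@lt_le_trans _ _ (eta t0)%:E) ?lte_fin//.
  by apply: le_ereal_inf_tmp => _ [t Kt <-]; rewrite lee_fin eta_min//; exact: mem_set.
by move: fin_ext; rewrite (extremal_atoms_idx t0 Kt0 eta_le0) => /infN.
Qed.

End ExtremalAtoms.

Theorem proposition1 (R : realType) (T : metricType R)
  (d : measure_display) (Omega : measurableType d) (P : probability Omega R)
  (eta : Omega -> T -> R) (mu : {measure set (C0_borel T) -> \bar R})
  (N : Omega -> option nat) (phi : Omega -> nat -> T -> R) (K : set T) :
  compact [set: T] ->
  (forall t, measurable_fun [set: Omega] (fun w => eta w t)) ->
  (forall w, continuous (eta w)) ->
  (forall t, vertex P eta t = 0%E) ->
  exponent_measure P eta mu ->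
  poisson_random_measure P N phi mu ->
  {ae P, forall w, forall t, (eta w t)%:E = maxPhi (N w) (phi w) t} ->
  closed K ->
  ({ae P, forall w, finite_set
      [set i | idx (N w) i /\ exists2 t, K t & eta w t <= phi w i t]}
   <->
   ((mu (C0 T) < +oo)%E \/
    (mu (C0 T) = +oo%E /\
     {ae P, forall w, (0 < ereal_inf [set (eta w t)%:E | t in K])%E}))).
Proof.
move=> cT _ ceta _ [_ [mu_supnorm_gt _]] prm _ clK.
have [C0phi _ _ _ _] := prm.
have cK : compact K by exact: subclosed_compact clK cT _.
have mC0 : measurable (C0 T : set (C0_borel T)).
  by apply: sub_sigma_algebra; split=> // f C0f; exists 1.
split=> [ext_fin|[muC0_fin|[_ inf_gt0]]].
- have [muC0_fin|muC0_oo] := ltP (mu (C0 T)) +oo%E; [by left|right].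
  have muC0 : mu (C0 T) = +oo%E by apply/eqP; rewrite -leye_eq.
  split=> //; apply: (filterS2 _ _ ext_fin (ae_point_measure_infty prm _ mC0 muC0)).
  move=> w fin_ext /point_measure_infty_None Nw.
  apply: extremal_atoms_finite_inf_gt0 fin_ext => //; first exact: C0phi.
  by rewrite Nw; exact: infinite_nat.
- apply: filterS (ae_point_measure_neq_infty prm _ mC0 muC0_fin) => w.
  by apply: extremal_atoms_finite => _ [i [Ni _] <-]; exact: C0phi.
- have mA n : measurable
      ([set f | C0 T f /\ ((n.+1%:R)^-1%:E < supnorm f)%E] : set (C0_borel T)).
    by apply: sub_sigma_algebra; exact: C0_open_supnorm_gt.
  have invSn_gt0 n : 0 < (n.+1%:R : R)^-1 by rewrite invr_gt0.
  have := ae_foralln (fun n =>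
    ae_point_measure_neq_infty prm _ (mA n) (mu_supnorm_gt _ (invSn_gt0 n))).
  apply: (filterS2 _ _ inf_gt0) => w /exists_invSn_lte[n n_lt_inf] Phi_fin.
  apply: (extremal_atoms_finite _ _ (Phi_fin n)).
  exact: extremal_atoms_supnorm_gt (C0phi w) _ n_lt_inf.
Qed.
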